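(* For $1\le p<\infty$, let $\ell_p$ be the real space of sequences $x=(x_i)$ with $\|x\|_p=(\sum_i|x_i|^p)^{1/p}<\infty$. Then $S_P(\ell_p)\ge 1-2^{-\left|\frac{2}{p}-1\right|}$.
   Context: For a real Banach space $X$ with unit sphere $S_X$, the P-angle constant is $S_P(X)=\sup\left\{\frac{\|x+y\|^2+\|x-y\|^2-4}{2\|x+y\|\,\|x-y\|}: x,y\in S_X,\ x\neq \pm y\right\}$ (this is the supremum of $\cos\operatorname{ang}_P(x+y,x-y)$, where $\operatorname{ang}_P(u,v)=\arccos\frac{\|u\|^2+\|v\|^2-\|u-v\|^2}{2\|u\|\|v\|}$). *)

From HB Require Import structures.
From mathcomp Require Import all_boot all_order all_algebra.
From mathcomp Require Import all_classical all_reals all_analysis.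
Set Implicit Arguments. Unset Strict Implicit. Unset Printing Implicit Defensive.
Import Order.TTheory GRing.Theory Num.Theory.
Import numFieldNormedType.Exports.
Local Open Scope classical_set_scope.
Local Open Scope ring_scope.

Definition in_lp (R : realType) (p : R) (x : nat -> R) : Prop :=
  cvgn (series (fun i => `|x i| `^ p)).

Definition lp_norm (R : realType) (p : R) (x : nat -> R) : R :=
  (limn (series (fun i => `|x i| `^ p))) `^ (p^-1).

Definition P_ratio (R : realType) (nrm : (nat -> R) -> R) (x y : nat -> R) : R :=
  (nrm (x \+ y) ^+ 2 + nrm (x \- y) ^+ 2 - 4) / (2 * nrm (x \+ y) * nrm (x \- y)).

Definition SP_set_lp (R : realType) (p : R) : set R :=
  [set r | exists x y : nat -> R,
     [/\ in_lp p x /\ in_lp p y, lp_norm p x = 1 /\ lp_norm p y = 1,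
         x <> y, x <> (fun i => - y i) & r = P_ratio (lp_norm p) x y]].

(* The P-angle constant S_P(l_p) (a supremum in R; the set is nonempty and
   bounded in [-1,1]). *)
Definition SP_lp (R : realType) (p : R) : R := sup (SP_set_lp p).

From HB Require Import structures.
From mathcomp Require Import all_boot all_order all_algebra.
From mathcomp Require Import all_classical all_reals all_analysis.
From mathcomp Require Import ring lra.
Import Order.TTheory GRing.Theory Num.Theory.
Import numFieldNormedType.Exports.
Local Open Scope classical_set_scope.
Local Open Scope ring_scope.

(* Two explicit pairs on the unit sphere, supported on the first two
   coordinates, realise the bound. If ||x+y|| = ||x-y|| = s, the P-ratio is
   1 - 2/s^2. The basis vectors e0, e1 give s = 2^(1/p), i.e. 1 - 2^(1-2/p),
   which is the claim for p <= 2; x = h(1,1), y = h(1,-1) with h = 2^(-1/p)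
   give s = 2h, i.e. 1 - 2^(2/p-1), the claim for p >= 2. To compare with the
   supremum the set must be bounded above (sup of an unbounded set is junk):
   convexity of t |-> t^p keeps ||x +- y||_p <= 2 on the sphere, so every
   P-ratio is at most 1. *)

Section LpSphere.
Variable R : realType.
Implicit Types (p a b s : R) (x y z : nat -> R).

Lemma powRD_le_mean {p a b} : 1 <= p -> 0 <= a -> 0 <= b ->
  (a + b) `^ p <= 2 `^ p / 2 * (a `^ p + b `^ p).
Proof.
move=> p1 a0 b0.
have half_compl : 2^-1 = 1 - 2^-1 :> R by rewrite {2}(splitr 1) div1r addrK.
have mid_le : (2^-1 * a + 2^-1 * b) `^ p <= 2^-1 * a `^ p + 2^-1 * b `^ p.
  rewrite {2 4}half_compl; apply: (convex_powR p1 (Itv01 _ _)) => //=;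
  by rewrite ?inE/= ?in_itv/= ?andbT // ?invr_ge0// invf_le1 ?ler1n.
have -> : a + b = 2 * (2^-1 * a + 2^-1 * b).
  by rewrite -mulrDr mulrA mulfV ?mul1r.
rewrite powRM ?addr_ge0 ?mulr_ge0 ?invr_ge0 // -mulrA ler_pM2l ?powR_gt0 //.
by rewrite mulrDr.
Qed.

Lemma limn_series_ge0 (u : nat -> R) : (forall n, 0 <= u n) ->
  cvgn (series u) -> 0 <= limn (series u).
Proof.
move=> u0 cu; apply: limr_ge => //; near=> n.
by rewrite /series /= sumr_ge0.
Unshelve. all: by end_near. Qed.

Lemma lp_norm_ge0 p x : 0 <= lp_norm p x.
Proof. exact: powR_ge0. Qed.

Lemma lp_unit_sum p x : 0 < p -> in_lp p x -> lp_norm p x = 1 ->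
  limn (series (fun i => `|x i| `^ p)) = 1.
Proof.
move=> p0 cx; rewrite /lp_norm => nx.
have sum_ge0 : 0 <= limn (series (fun i => `|x i| `^ p)).
  by apply: limn_series_ge0 => // i; exact: powR_ge0.
rewrite -[LHS]powRr1 // -[1 in LHS](@mulVf _ p) ?gt_eqF //.
by rewrite powRrM nx powR1.
Qed.

Lemma lp_norm_dominated_le2 {p x y z} : 1 <= p -> in_lp p x -> in_lp p y ->
  lp_norm p x = 1 -> lp_norm p y = 1 ->
  (forall i, `|z i| <= `|x i| + `|y i|) -> lp_norm p z <= 2.
Proof.
move=> p1 cx cy nx ny zxy.
have p0 : 0 < p by apply: lt_le_trans p1.
pose w := (2 `^ p / 2) *: ((fun i => `|x i| `^ p) + (fun i => `|y i| `^ p)).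
have zw i : `|z i| `^ p <= w i.
  have -> : w i = 2 `^ p / 2 * (`|x i| `^ p + `|y i| `^ p) by [].
  apply: le_trans (powRD_le_mean p1 (normr_ge0 (x i)) (normr_ge0 (y i))).
  by apply: ge0_ler_powR => //; rewrite ?nnegrE ?addr_ge0 // ltW.
have cxy := is_cvg_seriesD cx cy.
have cw : cvgn (series w) := @is_cvg_seriesZ _ _ (2 `^ p / 2) cxy.
have cz : cvgn (series (fun i => `|z i| `^ p)).
  apply: (series_le_cvg _ _ zw cw) => n; first exact: powR_ge0.
  exact: le_trans (powR_ge0 _ _) (zw n).
have lim_w : limn (series w) = 2 `^ p.
  rewrite (lim_seriesZ (2 `^ p / 2) cxy) (lim_seriesD cx cy) !lp_unit_sum //.
  by rewrite /GRing.scale /= -mulrA mulVf ?mulr1.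
have := lim_series_le cz cw zw; rewrite lim_w => sum_le.
apply: le_trans (ge0_ler_powR _ _ _ sum_le) _.
- by rewrite invr_ge0 ltW.
- by rewrite nnegrE limn_series_ge0 // => i; exact: powR_ge0.
- by rewrite nnegrE powR_ge0.
by rewrite -powRrM mulfV ?gt_eqF // powRr1.
Qed.

Lemma P_ratio_le1 (nrm : (nat -> R) -> R) x y :
  0 <= nrm (x \+ y) <= 2 -> 0 <= nrm (x \- y) <= 2 -> P_ratio nrm x y <= 1.
Proof.
rewrite /P_ratio; set a := nrm _; set b := nrm _ => /andP[a0 a2] /andP[b0 b2].
have [->|ab_neq0] := eqVneq (2 * a * b) 0; first by rewrite invr0 mulr0.
have ab_gt0 : 0 < 2 * a * b by rewrite lt_neqAle eq_sym ab_neq0 !mulr_ge0.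
rewrite ler_pdivrMr // mul1r; nra.
Qed.

Lemma P_ratio_balanced (nrm : (nat -> R) -> R) x y s : s != 0 ->
  nrm (x \+ y) = s -> nrm (x \- y) = s -> P_ratio nrm x y = 1 - 2 / s ^+ 2.
Proof. by move=> s0 ns nd; rewrite /P_ratio ns nd; field. Qed.

Lemma SP_set_lp_le1 p r : 1 <= p -> SP_set_lp p r -> r <= 1.
Proof.
move=> p1 [x [y [[cx cy] [nx ny] _ _ ->]]].
apply: P_ratio_le1; rewrite lp_norm_ge0 /=;
  apply: (lp_norm_dominated_le2 p1 cx cy nx ny) => i /=.
  exact: ler_normD.
exact: le_trans (ler_normB _ _) _.
Qed.

Lemma SP_set_lp_le_SP_lp p r : 1 <= p -> SP_set_lp p r -> r <= SP_lp p.
Proof.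
move=> p1 Sr; apply: ub_le_sup Sr.
by exists 1 => ?; apply: SP_set_lp_le1.
Qed.

Definition seq2 a b : nat -> R :=
  fun i => if i == 0%N then a else if i == 1%N then b else 0.

Lemma seq2_series_cvg {p a b} : 0 < p ->
  series (fun i => `|seq2 a b i| `^ p) @ \oo --> (`|a| `^ p + `|b| `^ p).
Proof.
move=> p0; apply: cvg_near_cst; exists 2%N => // n /= n_ge2.
rewrite /series /= -(subnKC n_ge2) !big_nat_recl //= big1 ?addr0 //.
by move=> i _; rewrite /seq2 /= normr0 powR0 // gt_eqF.
Qed.

Lemma seq2_in_lp p a b : 0 < p -> in_lp p (seq2 a b).
Proof. by move=> p0; apply/cvg_ex; eexists; exact: seq2_series_cvg. Qed.

Lemma lp_norm_seq2 p a b : 0 < p ->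
  lp_norm p (seq2 a b) = (`|a| `^ p + `|b| `^ p) `^ p^-1.
Proof. by move=> p0; rewrite /lp_norm (cvg_lim _ (seq2_series_cvg p0)). Qed.

Lemma powRK p a : 0 < p -> 0 <= a -> (a `^ p) `^ p^-1 = a.
Proof. by move=> p0 a0; rewrite -powRrM mulfV ?gt_eqF // powRr1. Qed.

Lemma lp_norm_seq2_l p a : 0 < p -> 0 <= a -> lp_norm p (seq2 a 0) = a.
Proof.
by move=> p0 a0; rewrite lp_norm_seq2 // normr0 powR0 ?gt_eqF // addr0 ger0_norm ?powRK.
Qed.

Lemma lp_norm_seq2_r p a : 0 < p -> 0 <= a -> lp_norm p (seq2 0 a) = a.
Proof.
by move=> p0 a0; rewrite lp_norm_seq2 // normr0 powR0 ?gt_eqF // add0r ger0_norm ?powRK.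
Qed.

Lemma seq2D a b c d : seq2 a b \+ seq2 c d = seq2 (a + c) (b + d).
Proof. by apply/funext => -[|[|i]] //=; rewrite /seq2 /= addr0. Qed.

Lemma seq2B a b c d : seq2 a b \- seq2 c d = seq2 (a - c) (b - d).
Proof. by apply/funext => -[|[|i]] //=; rewrite /seq2 /= subr0. Qed.

Lemma seq2_eq a b c d : seq2 a b = seq2 c d -> a = c /\ b = d.
Proof. by move=> e; split; [move: (congr1 (@^~ 0%N) e) | move: (congr1 (@^~ 1%N) e)]. Qed.

Lemma SP_lp_ge_basis p : 1 <= p -> 1 - 2 / (2 `^ p^-1) ^+ 2 <= SP_lp p.
Proof.
move=> p1; have p0 : 0 < p by apply: lt_le_trans p1.
have s_eq : lp_norm p (seq2 1 1) = 2 `^ p^-1.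
  by rewrite lp_norm_seq2 // normr1 powR1.
have s_neq0 : 2 `^ p^-1 != 0 :> R by rewrite gt_eqF ?powR_gt0.
rewrite -(@P_ratio_balanced (lp_norm p) (seq2 1 0) (seq2 0 1) _ s_neq0);
  first last.
- by rewrite seq2B subr0 sub0r -s_eq !(lp_norm_seq2 _ _ _ p0) normrN.
- by rewrite seq2D addr0 add0r.
apply: SP_set_lp_le_SP_lp => //; exists (seq2 1 0), (seq2 0 1); split.
- by split; apply: seq2_in_lp.
- by rewrite lp_norm_seq2_l ?lp_norm_seq2_r.
- by move/seq2_eq => [/eqP]; rewrite oner_eq0.
- by move=> /(congr1 (@^~ 0%N)) /eqP; rewrite /seq2 /= oppr0 oner_eq0.
- by [].
Qed.

Lemma SP_lp_ge_diag p : 1 <= p -> 1 - (2 `^ p^-1) ^+ 2 / 2 <= SP_lp p.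
Proof.
move=> p1; have p0 : 0 < p by apply: lt_le_trans p1.
set t := 2 `^ p^-1; have t_gt0 : 0 < t by rewrite powR_gt0.
set h := t^-1; have h_gt0 : 0 < h by rewrite invr_gt0.
have hp : h `^ p = 2^-1.
  by rewrite /h /t -powRN -powRrM mulNr mulVf ?gt_eqF // powR_inv1.
have s_neq0 : h + h != 0 by rewrite gt_eqF ?addr_gt0.
have -> : 1 - t ^+ 2 / 2 = 1 - 2 / (h + h) ^+ 2 by rewrite /h; field; rewrite gt_eqF.
rewrite -(@P_ratio_balanced (lp_norm p) (seq2 h h) (seq2 h (- h)) _ s_neq0);
  first last.
- by rewrite seq2B subrr opprK lp_norm_seq2_r // addr_ge0 ?ltW.
- by rewrite seq2D subrr lp_norm_seq2_l // addr_ge0 ?ltW.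
apply: SP_set_lp_le_SP_lp => //; exists (seq2 h h), (seq2 h (- h)); split.
- by split; apply: seq2_in_lp.
- by rewrite !lp_norm_seq2 // normrN ger0_norm ?ltW // hp -[2^-1]div1r -splitr powR1.
- by move/seq2_eq => [_ /eqP]; rewrite -subr_eq0 opprK (negPf s_neq0).
- by move=> /(congr1 (@^~ 0%N)) /eqP; rewrite /seq2 /= -subr_eq0 opprK (negPf s_neq0).
- by [].
Qed.

End LpSphere.

Theorem mainTheorem2 (R : realType) (p : R) (hp : 1 <= p) :
  1 - (2 : R) `^ (- `|2 / p - 1|) <= SP_lp p.
Proof.
have two_neq0 : (2 : R) != 0 by rewrite pnatr_eq0.
have sqr_root : (2 `^ p^-1) ^+ 2 = (2 : R) `^ (2 / p).
  by rewrite expr2 -powRD ?two_neq0 ?implybT // -mulr2n mulr_natl.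
have [c_ge0|c_lt0] := leP 0 (2 / p - 1).
- rewrite ger0_norm // opprB powRB ?two_neq0 ?implybT // powRr1 // -sqr_root.
  exact: SP_lp_ge_basis.
- rewrite ltr0_norm // opprK powRB ?two_neq0 ?implybT // powRr1 // -sqr_root.
  exact: SP_lp_ge_diag.
Qed.
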